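(* Fix $0<\varepsilon<1$ and let $n$ be sufficiently large with respect to $\varepsilon$; let $m=\lceil n/\log^8 n\rceil$. Let $P=\{(u_1,v_1),\dots,(u_s,v_s)\}$ be an $s$-pairing in $[n]$ with $s\ge\varepsilon n$, and let $\pi:[n]\to[m]$ be a map that is $\varepsilon$-respectful of $P$ and satisfies $|\pi^{-1}(x)|\le 2n/m$ for all $x\in[m]$. Let $\Pi$ be the set of all unordered pairs $\big\{\{\pi(u_i),\pi(u_j)\},\{\pi(v_i),\pi(v_j)\}\big\}$ over all $i,j\in[s]$ with $\pi(u_i)\neq\pi(u_j)$, $\pi(v_i)\ne\pi(v_j)$ and $\{\pi(u_i),\pi(u_j)\}\neq\{\pi(v_i),\pi(v_j)\}$. Then $|\Pi|\ge\varepsilon^4 n^2/6$.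
   Context: Logarithms are natural. An $s$-pairing in $[n]$ is a collection $\{(u_1,v_1),\dots,(u_s,v_s)\}$ of pairs where $u_1,\dots,u_s,v_1,\dots,v_s$ are distinct elements of $[n]$. A map $\pi:[n]\to[m]$ is $\varepsilon$-respectful of it if there is $I\subseteq[s]$ with $|I|\ge\varepsilon s$ such that $\pi(u_i)\ne\pi(v_i)$ for all $i\in I$ and the pairs $\{\pi(u_i),\pi(v_i)\}$, $i\in I$, are pairwise distinct. *)

From mathcomp Require Import all_boot all_order all_algebra.
From mathcomp Require Import all_classical all_reals all_analysis.
Set Implicit Arguments. Unset Strict Implicit. Unset Printing Implicit Defensive.
Import Order.TTheory GRing.Theory Num.Theory.
Local Open Scope ring_scope.

(* [n] is modelled by 'I_n. An s-pairing {(u_1,v_1),...,(u_s,v_s)} in [n] is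
   given by u v : 'I_s -> 'I_n such that all of u_1..u_s,v_1..v_s are distinct. *)
Definition is_pairing (n s : nat) (u v : 'I_s -> 'I_n) : Prop :=
  injective u /\ injective v /\ (forall i j, u i != v j).

(* The unordered pair {a, b} is the finite set [set a; b]. *)
Definition respectful (R : realType) (eps : R) (n m s : nat)
    (u v : 'I_s -> 'I_n) (pi : 'I_n -> 'I_m) : Prop :=
  exists I : {set 'I_s},
    eps * s%:R <= #|I|%:R /\
    (forall i, i \in I -> pi (u i) != pi (v i)) /\
    (forall i j, i \in I -> j \in I ->
       [set pi (u i); pi (v i)] = [set pi (u j); pi (v j)] -> i = j).

Definition Pi_set (n m s : nat) (u v : 'I_s -> 'I_n) (pi : 'I_n -> 'I_m)
  : {set {set {set 'I_m}}} :=
  [set [set [set pi (u ij.1); pi (u ij.2)]; [set pi (v ij.1); pi (v ij.2)]]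
    | ij in [set ij : 'I_s * 'I_s |
        [&& pi (u ij.1) != pi (u ij.2), pi (v ij.1) != pi (v ij.2) &
            [set pi (u ij.1); pi (u ij.2)] != [set pi (v ij.1); pi (v ij.2)]]]].

From mathcomp Require Import all_boot all_order all_algebra.
From mathcomp Require Import all_classical all_reals all_analysis.
From mathcomp Require Import lra.
Import Order.TTheory GRing.Theory Num.Theory.
Set Implicit Arguments. Unset Strict Implicit. Unset Printing Implicit Defensive.
Local Open Scope ring_scope.
Local Notation setX := finset.setX.

(* Count ordered pairs (i, j) in I x I, I the index set witnessing
   respectfulness, rather than the elements of Pi.  A pair fails to be good
   only if pi(u_j) = pi(u_i), pi(v_j) = pi(v_i) or pi(v_j) = pi(u_i), and for
   fixed i each collision leaves at most 2n/m choices of j; as m >= 18/eps^2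
   for large n, 2n/m <= eps^2 n / 9 <= |I| / 9, so at least 2/3 |I|^2 pairs
   are good.  An element {A, B} of Pi comes from at most 4 good pairs: the
   orientation and pi(u_i) in A fix the pair (pi(u_i), pi(v_i)), hence i by
   respectfulness, and then j.  Thus |Pi| >= |I|^2 / 6 >= eps^4 n^2 / 6. *)

Lemma set2_eqE (T : finType) (a b c d : T) :
  [set a; b] = [set c; d] -> (a = c /\ b = d) \/ (a = d /\ b = c).
Proof.
move=> E.
have : a \in [set c; d] by rewrite -E !inE eqxx.
have : b \in [set c; d] by rewrite -E !inE eqxx orbT.
have : c \in [set a; b] by rewrite E !inE eqxx.
have : d \in [set a; b] by rewrite E !inE eqxx orbT.
rewrite !inE => /orP[]/eqP? /orP[]/eqP? /orP[]/eqP? /orP[]/eqP?; subst; tauto.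
Qed.

Lemma set2_inj (T : finType) (a b c : T) : [set a; b] = [set a; c] -> b = c.
Proof. by case/set2_eqE=> [[_ ->]|[-> ->]]. Qed.

Lemma card_le_fibres (R : numDomainType) (T J : finType) (A : {set T})
    (f : T -> J) (c : R) :
  (forall y, #|[set x in A | f x == y]|%:R <= c) ->
  #|A|%:R <= #|f @: A|%:R * c.
Proof.
move=> fibre_le.
rewrite -sum1_card (partition_big_imset f) natr_sum mulrC mulr_natr -sumr_const.
apply: ler_sum => y _; apply: le_trans (fibre_le y).
by rewrite sum1dep_card ler_nat; apply/eq_leq/eq_card => x; rewrite !inE.
Qed.

Section PairsOfIndices.

Variables (S T : finType) (a b : S -> T) (I : {set S}).

Definition good_pair (ij : S * S) :=
  [&& a ij.1 != a ij.2, b ij.1 != b ij.2 &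
      [set a ij.1; a ij.2] != [set b ij.1; b ij.2]].

Definition pair_label (ij : S * S) :=
  [set [set a ij.1; a ij.2]; [set b ij.1; b ij.2]].

Definition good_pairs_in := [set ij in setX I I | good_pair ij].

Lemma card_collisions_le (R : numDomainType) (g h : S -> T) (c : R) :
  0 <= c -> (forall t, #|[set j | g j == t]|%:R <= c) ->
  #|[set ij in setX I I | g ij.2 == h ij.1]|%:R <= #|I|%:R * c.
Proof.
move=> c_ge0 fibre_le; apply: le_trans (card_le_fibres (f := fst) _) _.
  move=> i; apply: le_trans (fibre_le (h i)); rewrite ler_nat.
  have pair_inj : injective (pair i : S -> S * S) by move=> ? ? [].
  rewrite -(card_imset [set j | g j == h i] pair_inj); apply: subset_leq_card.
  apply/fintype.subsetP => -[i' j]; rewrite !inE /= => /andP[/andP[_ gj] /eqP<-].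
  by apply/imsetP; exists j; rewrite ?inE.
rewrite ler_wpM2r // ler_nat; apply: subset_leq_card.
by apply/fintype.subsetP => _ /imsetP[-[i j] + ->]; rewrite !inE => /andP[/andP[]].
Qed.

Hypothesis a_neq_b : {in I, forall i, a i != b i}.

Lemma card_good_pairs_ge (R : realDomainType) (c : R) :
  0 <= c ->
  (forall t, #|[set j | a j == t]|%:R <= c) ->
  (forall t, #|[set j | b j == t]|%:R <= c) ->
  #|I|%:R ^+ 2 - 3 * (#|I|%:R * c) <= #|good_pairs_in|%:R.
Proof.
move=> c_ge0 fibre_a fibre_b.
set B1 := [set ij in setX I I | a ij.2 == a ij.1].
set B2 := [set ij in setX I I | b ij.2 == b ij.1].
set B3 := [set ij in setX I I | b ij.2 == a ij.1].
have cover : setX I I \subset good_pairs_in :|: (B1 :|: (B2 :|: B3)).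
  apply/fintype.subsetP => -[i j]; rewrite !inE /= => /andP[Ii Ij].
  rewrite Ii Ij /= /good_pair /=.
  have [->|_] := eqVneq (a j) (a i); first by rewrite !orbT.
  have [->|_] := eqVneq (b j) (b i); first by rewrite !orbT.
  have [->|ba] := eqVneq (b j) (a i); first by rewrite !orbT.
  rewrite /= !orbF; apply/eqP => sets_eq.
  have : a i \in [set b i; b j] by rewrite -sets_eq !inE eqxx.
  by rewrite !inE (negbTE (a_neq_b Ii)) eq_sym (negbTE ba).
have := subset_leq_card cover; rewrite -(ler_nat R) cardsX natrM => cover_le.
have le_union (X Y : {set S * S}) : #|X :|: Y|%:R <= #|X|%:R + #|Y|%:R :> R.
  by rewrite -natrD ler_nat leq_card_setU.
have := card_collisions_le a c_ge0 fibre_a.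
have := card_collisions_le b c_ge0 fibre_b.
have := card_collisions_le a c_ge0 fibre_b.
have := le_union B2 B3; have := le_union B1 (B2 :|: B3).
have := le_union good_pairs_in (B1 :|: (B2 :|: B3)).
rewrite expr2 -/B1 -/B2 -/B3; lra.
Qed.

Hypothesis ends_inj :
  {in I &, forall i j, [set a i; b i] = [set a j; b j] -> i = j}.

Lemma ends_not_swapped i k : i \in I -> k \in I -> (a i, b i) != (b k, a k).
Proof.
move=> Ii Ik; apply/eqP => -[ai bi].
have ik : i = k by apply: ends_inj; rewrite // ai bi finset.setUC.
by move: (a_neq_b Ii); rewrite ai ik eqxx.
Qed.

Lemma good_pair_eq i j k l : [&& i \in I, j \in I, k \in I & l \in I] ->
  [set a i; a j] = [set a k; a l] -> [set b i; b j] = [set b k; b l] ->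
  a i = a k -> b i = b k -> (i, j) = (k, l).
Proof.
case/and4P=> Ii Ij Ik Il sa sb ai bi.
have ik : i = k by apply: ends_inj; rewrite // ai bi.
rewrite -ik in sa sb *; congr (_, _); apply: ends_inj => //.
by rewrite (set2_inj sa) (set2_inj sb).
Qed.

Lemma card_label_fibre_le4 y :
  (#|[set ij in good_pairs_in | pair_label ij == y]| <= 4)%N.
Proof.
set F := [set _ in _ | _].
have [->|[[i0 j0] F0]] := set_0Vmem F; first by rewrite cards0.
set A := [set a i0; a j0]; set B := [set b i0; b j0].
have [AB oriented] : A != B /\ forall ij, ij \in F -> [&& ij.1 \in I, ij.2 \in I &
    (([set a ij.1; a ij.2] == A) && ([set b ij.1; b ij.2] == B)) ||
    (([set a ij.1; a ij.2] == B) && ([set b ij.1; b ij.2] == A))].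
  move: F0; rewrite !inE => /andP[/andP[/andP[Ii0 Ij0] /and3P[_ _ AB]] /eqP label0].
  split=> // ij; rewrite !inE -label0 => /andP[/andP[/andP[-> ->] _] /eqP /set2_eqE].
  by case=> -[-> ->]; rewrite !eqxx ?orbT.
pose orient ij := if [set a ij.1; a ij.2] == A then (a ij.1, b ij.1)
                  else (b ij.1, a ij.1).
rewrite -(card_in_imset (f := orient)).
  apply: leq_trans (subset_leq_card (_ : _ \subset setX A B)) _.
    apply/fintype.subsetP => _ /imsetP[ij /oriented/and3P[_ _ + ->]].
    rewrite /orient; case/orP=> /andP[/eqP sa /eqP sb].
      by rewrite sa eqxx finset.in_setX -sa -sb !inE !eqxx.
    by rewrite sa eq_sym (negbTE AB) finset.in_setX -sa -sb !inE !eqxx.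
  by rewrite cardsX !cards2; case: (_ != _); case: (_ != _).
move=> [i j] [k l] /oriented/and3P[/= Ii Ij Cij] /oriented/and3P[/= Ik Il Ckl].
have Iijkl : [&& i \in I, j \in I, k \in I & l \in I] by rewrite Ii Ij Ik Il.
have BA : (B == A) = false by rewrite eq_sym (negbTE AB).
rewrite /orient /=.
case/orP: Cij => /andP[/eqP sa /eqP sb]; case/orP: Ckl => /andP[/eqP sa' /eqP sb'];
  rewrite sa sa' ?eqxx ?BA.
- by case=> ai bi; apply: good_pair_eq; rewrite // ?sa ?sa' ?sb ?sb'.
- by move/eqP; rewrite (negbTE (ends_not_swapped Ii Ik)).
- by move/eqP; rewrite eq_sym (negbTE (ends_not_swapped Ik Ii)).
- by case=> bi ai; apply: good_pair_eq; rewrite // ?sa ?sa' ?sb ?sb'.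
Qed.

Lemma card_good_pairs_le (R : numDomainType) :
  #|good_pairs_in|%:R <= #|pair_label @: [set ij | good_pair ij]|%:R * 4 :> R.
Proof.
apply: le_trans (card_le_fibres (f := pair_label) (c := 4) _) _.
  by move=> y; rewrite (ler_nat _ _ 4) card_label_fibre_le4.
rewrite ler_wpM2r // ler_nat; apply/subset_leq_card/imsetS.
by apply/fintype.subsetP => ij; rewrite !inE => /andP[].
Qed.

End PairsOfIndices.

(* [expR t >= t ^+ k.+1 / k.+1`!] with [t = ln n >= k.+1`! * M]. *)
Lemma div_ln_pow_large (R : realType) (M : R) (k : nat) : 0 < M ->
  exists N : nat, forall n, (N <= n)%N -> M <= n%:R / ln (n%:R : R) ^+ k.
Proof.
move=> M_gt0; set K := k.+1`!%:R * M.
have fact_gt0 : 0 < k.+1`!%:R :> R by rewrite ltr0n fact_gt0.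
have K_gt0 : 0 < K by rewrite mulr_gt0.
exists (Num.bound (expR K)) => n Hn.
have n_gt : expR K < n%:R.
  by apply: lt_le_trans (archi_boundP (expR_ge0 K)) _; rewrite ler_nat.
have n_gt0 : 0 < n%:R :> R by apply: lt_trans n_gt; exact: expR_gt0.
set t := ln (n%:R : R).
have K_le_t : K <= t by rewrite -ler_expR lnK ?posrE // ltW.
have t_gt0 : 0 < t by apply: lt_le_trans K_le_t.
rewrite ler_pdivlMr ?exprn_gt0 //.
have key : M * t ^+ k <= t ^+ k.+1 / k.+1`!%:R.
  rewrite ler_pdivlMr // exprS mulrAC [M * _]mulrC -/K.
  by rewrite ler_wpM2r ?exprn_ge0 ?(ltW t_gt0).
have := expR_ge1Dxn k (ltW t_gt0); rewrite lnK ?posrE //.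
lra.
Qed.

Lemma card_fibre_comp (aT rT J : finType) (w : aT -> rT) (f : rT -> J) x :
  injective w -> (#|[set j | f (w j) == x]| <= #|[set y | f y == x]|)%N.
Proof.
move=> w_inj; rewrite -(card_imset _ w_inj); apply: subset_leq_card.
by apply/fintype.subsetP => _ /imsetP[j + ->]; rewrite !inE.
Qed.

Lemma sqr_div6_le_of_count (R : realFieldType) (L x c g p : R) :
  0 <= L <= x -> 0 <= c <= L / 9 ->
  x ^+ 2 - 3 * (x * c) <= g -> g <= p * 4 -> L ^+ 2 / 6 <= p.
Proof.
case/andP=> L_ge0 L_le_x /andP[c_ge0 c_le] g_ge g_le.
have x_ge0 : 0 <= x := le_trans L_ge0 L_le_x.
have : 0 <= x * (L / 9 - c) by rewrite mulr_ge0 // subr_ge0.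
have : 0 <= x * (x - L) by rewrite mulr_ge0 // subr_ge0.
have : 0 <= (x - L) * (x + L) by rewrite mulr_ge0 ?subr_ge0 // addr_ge0.
nra.
Qed.

Theorem lemma5p2 (R : realType) (eps : R) :
  0 < eps < 1 ->
  exists N : nat, forall n : nat, (N <= n)%N ->
  forall m : nat,
    (m%:Z = Num.ceil (n%:R / (ln (n%:R : R)) ^+ 8)) ->
  forall (s : nat) (u v : 'I_s -> 'I_n),
    is_pairing u v -> eps * n%:R <= s%:R ->
  forall pi : 'I_n -> 'I_m,
    respectful eps u v pi ->
    (forall x : 'I_m, #|[set y | pi y == x]|%:R <= 2 * n%:R / (m%:R : R)) ->
    eps ^+ 4 * (n%:R) ^+ 2 / 6 <= (#|Pi_set u v pi|%:R : R).
Proof.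
move=> /andP[eps_gt0 _]; have eps2_gt0 : 0 < eps ^+ 2 by rewrite exprn_gt0.
have [N large] := div_ln_pow_large 8 (divr_gt0 (ltr0n R 18) eps2_gt0).
exists N => n le_Nn m m_def s u v [u_inj [v_inj _]] s_ge pi
  [I [I_ge [a_neq_b ends_inj]]] fibre_le.
have m_ge : 18 / eps ^+ 2 <= m%:R.
  by apply: le_trans (large n le_Nn) _; rewrite [m%:R]pmulrn m_def ceil_ge.
have m_gt0 : 0 < m%:R :> R by apply: lt_le_trans m_ge; rewrite divr_gt0.
set c : R := 2 * n%:R / m%:R in fibre_le.
have c_ge0 : 0 <= c by rewrite divr_ge0 ?mulr_ge0.
have c_le : c <= eps ^+ 2 * n%:R / 9.
  move: m_ge; rewrite /c !ler_pdivrMr // -subr_ge0 => /(mulr_ge0 (ler0n R n)).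
  nra.
have fibre_comp (w : 'I_s -> 'I_n) :
    injective w -> forall x, #|[set j | pi (w j) == x]|%:R <= c.
  by move=> w_inj x; apply: le_trans (fibre_le x); rewrite ler_nat card_fibre_comp.
rewrite (_ : eps ^+ 4 * _ = (eps ^+ 2 * n%:R) ^+ 2); last by rewrite exprMn -exprM.
have good_le : #|good_pairs_in (pi \o u) (pi \o v) I|%:R <= #|Pi_set u v pi|%:R * 4
  := card_good_pairs_le a_neq_b ends_inj R.
have good_ge :=
  card_good_pairs_ge a_neq_b c_ge0 (fibre_comp u u_inj) (fibre_comp v v_inj).
apply: (sqr_div6_le_of_count _ _ good_ge good_le).
- rewrite mulr_ge0 ?(ltW eps2_gt0) //=.
  by apply: le_trans I_ge; rewrite expr2 -mulrA ler_wpM2l ?(ltW eps_gt0).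
- by rewrite c_ge0 c_le.
Qed.
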